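(* Let $\mathbf L$ be a bounded lattice with canonical polarity $(X,\parallel,Y)$ and spaces $\mathfrak X=(X,\mathcal B)$, $\mathfrak Y=(Y,\mathcal C)$, where $\mathcal B=\{X_a:a\in L\}$ and $\mathcal C=\{Y^a:a\in L\}$. Then $\mathcal B$ is exactly the family of subsets of $X$ that are both compact-open in $\mathfrak X$ and Galois stable, and $\mathcal C$ is exactly the family of subsets of $Y$ that are compact-open in $\mathfrak Y$ and Galois co-stable. Moreover $\mathcal B$ and $\mathcal C$ are dually isomorphic bounded lattices (via $A\mapsto A'$, with $(X_a)'=Y^a$), $\mathcal B$ a sublattice of $\mathcal G(X)$ and $\mathcal C$ a sublattice of $\mathcal G(Y)$.
   Context: Canonical polarity of a bounded lattice $\mathbf L$: $X$ is the set of proper filters of $\mathbf L$, $Y$ the set of proper ideals, and $x\parallel y$ iff $x\cap y\neq\emptyset$. For $a\in L$: $X_a=\{x\in X:a\in x\}$, $Y^a=\{y\in Y:a\in y\}$. $\mathfrak X$ (resp. $\mathfrak Y$) is $X$ (resp. $Y$) with the topology generated by the basis $\mathcal B$ (resp. $\mathcal C$). For $U\subseteq X$, $U'=\{y\in Y:\forall x\in U\;x\parallel y\}$; for $V\subseteq Y$, $V'=\{x\in X:\forall y\in V\;x\parallel y\}$. Stable sets $A=A''\subseteq X$ form the complete lattice $\mathcal G(X)$ (meets = intersections, joins $(\bigcup A_j)''$); co-stable sets $B=B''\subseteq Y$ form $\mathcal G(Y)$. *)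

From mathcomp Require Import all_boot all_order.
From Stdlib Require Import List.
Set Implicit Arguments.
Unset Strict Implicit.
Unset Printing Implicit Defensive.
Import Order.Theory.

Section Polarity.
Variables (disp : Order.disp_t) (L : tbLatticeType disp).

Definition subP {T : Type} (U V : T -> Prop) : Prop := forall x, U x -> V x.

Definition is_filter (F : L -> Prop) : Prop :=
  (exists a, F a) /\
  (forall a b : L, F a -> Order.le a b -> F b) /\
  (forall a b : L, F a -> F b -> F (Order.meet a b)).

Definition is_ideal (I : L -> Prop) : Prop :=
  (exists a, I a) /\
  (forall a b : L, I b -> Order.le a b -> I a) /\
  (forall a b : L, I a -> I b -> I (Order.join a b)).

Definition proper (P : L -> Prop) : Prop := exists a, ~ P a.

(* X = proper filters, Y = proper ideals, as subsets of the powerset of L *)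
Definition Xset (x : L -> Prop) : Prop := is_filter x /\ proper x.
Definition Yset (y : L -> Prop) : Prop := is_ideal y /\ proper y.

Definition par (x y : L -> Prop) : Prop := exists a, x a /\ y a.

Definition Xa (a : L) : (L -> Prop) -> Prop := fun x => Xset x /\ x a.
Definition Ya (a : L) : (L -> Prop) -> Prop := fun y => Yset y /\ y a.

Definition primeX (U : (L -> Prop) -> Prop) : (L -> Prop) -> Prop :=
  fun y => Yset y /\ forall x, U x -> par x y.
Definition primeY (V : (L -> Prop) -> Prop) : (L -> Prop) -> Prop :=
  fun x => Xset x /\ forall y, V y -> par x y.

Definition stableX (A : (L -> Prop) -> Prop) : Prop := A = primeY (primeX A).
Definition costableY (B : (L -> Prop) -> Prop) : Prop := B = primeX (primeY B).

(* topologies generated by the bases B = {X_a} and C = {Y^a}: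
   open sets are unions of basic sets *)
Definition openX (U : (L -> Prop) -> Prop) : Prop :=
  exists S : L -> Prop, U = fun x => exists a, S a /\ Xa a x.
Definition openY (U : (L -> Prop) -> Prop) : Prop :=
  exists S : L -> Prop, U = fun y => exists a, S a /\ Ya a y.

Definition compact_in (opn : ((L -> Prop) -> Prop) -> Prop)
  (K : (L -> Prop) -> Prop) : Prop :=
  forall Cov : ((L -> Prop) -> Prop) -> Prop,
    (forall V, Cov V -> opn V) ->
    (forall x, K x -> exists V, Cov V /\ V x) ->
    exists s : list ((L -> Prop) -> Prop),
      (forall V, In V s -> Cov V) /\
      (forall x, K x -> exists V, In V s /\ V x).

Definition compactX := compact_in openX.
Definition compactY := compact_in openY.

Definition inB (A : (L -> Prop) -> Prop) : Prop := exists a, A = Xa a.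
Definition inC (B : (L -> Prop) -> Prop) : Prop := exists a, B = Ya a.

Definition unionP {T : Type} (U V : T -> Prop) : T -> Prop := fun x => U x \/ V x.
Definition interP {T : Type} (U V : T -> Prop) : T -> Prop := fun x => U x /\ V x.

End Polarity.

Arguments is_filter {disp} L F.
Arguments is_ideal {disp} L I.
Arguments proper {disp} L P.
Arguments Xset {disp} L x.
Arguments Yset {disp} L y.
Arguments par {disp} L x y.
Arguments Xa {disp L} a _.
Arguments Ya {disp L} a _.
Arguments primeX {disp} L U _.
Arguments primeY {disp} L V _.
Arguments stableX {disp} L A.
Arguments costableY {disp} L B.
Arguments openX {disp} L U.
Arguments openY {disp} L U.
Arguments compact_in {disp} L opn K.
Arguments compactX {disp} L K.
Arguments compactY {disp} L K.
Arguments inB {disp} L A.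
Arguments inC {disp} L B.

From mathcomp Require Import all_boot all_order.
From Stdlib Require List.
From Stdlib Require Import FunctionalExtensionality PropExtensionality.
Set Implicit Arguments.
Unset Strict Implicit.
Import Order.Theory.
Local Open Scope order_scope.

(* Everything rests on one computation: (X_a)' = Y^a.  A proper ideal meets
   every proper filter containing a iff it contains a, because for a <> bot
   the principal filter of a is such a filter, and every ideal contains bot.
   From it we get that X_a is stable, and that the Galois map turns finite
   unions of basic sets into intersections Y^a /\ Y^b = Y^(a \/ b).
   Basic sets are open, and compact since X_a (a <> bot) has a least point,
   the principal filter of a.  Conversely a compact open stable set A is a
   finite union U of basic sets, hence A = U'' = (Y^c)' = X_c.
   The lattice laws X_a /\ X_b = X_(a/\b), (X_a \/ X_b)'' = X_(a\/b) and the
   antitonicity of the Galois maps give the dual isomorphism B ~ C^op.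
   Finally the order dual L^d swaps filters and ideals, hence X and Y, so
   every statement about C is the statement about B for L^d. *)

Lemma predE (T : Type) (U V : T -> Prop) : (forall t, U t <-> V t) -> U = V.
Proof.
move=> UV; apply: functional_extensionality => t.
exact: propositional_extensionality (UV t).
Qed.

Section Polarity.
Variables (disp : Order.disp_t) (L : tbLatticeType disp).

Lemma filter_up (x : L -> Prop) (a b : L) : Xset L x -> x a -> a <= b -> x b.
Proof. by move=> [[_ [up _]] _] xa ab; exact: up xa ab. Qed.

Lemma filter_meet (x : L -> Prop) (a b : L) :
  Xset L x -> x a -> x b -> x (a `&` b).
Proof. by move=> [[_ [_ mt]] _]; exact: mt. Qed.

Lemma ideal_down (y : L -> Prop) (a b : L) : Yset L y -> y b -> a <= b -> y a.
Proof. by move=> [[_ [down _]] _] yb ab; exact: down yb ab. Qed.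

Lemma ideal_join (y : L -> Prop) (a b : L) :
  Yset L y -> y a -> y b -> y (a `|` b).
Proof. by move=> [[_ [_ jn]] _]; exact: jn. Qed.

Lemma ideal_bot (y : L -> Prop) : Yset L y -> y \bot.
Proof. by move=> Yy; have [[[b yb] _] _] := Yy; exact: ideal_down Yy yb (le0x b). Qed.

Lemma Xa_bot (x : L -> Prop) : ~ Xa \bot x.
Proof.
move=> [Xx xbot]; have [_ [b nb]] := Xx.
by apply: nb; exact: filter_up Xx xbot (le0x b).
Qed.

(* The principal filter of a <> bot is the least point of X_a. *)
Lemma principal_filter (a : L) : a != \bot -> Xa a (fun b => a <= b).
Proof.
move=> a_neq0; split=> //; split; last first.
  by exists \bot; rewrite lex0; exact/negP.
split; first by exists a.
by split=> [b c ab bc|b c ab ac]; [exact: le_trans ab bc|rewrite lexI ab ac].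
Qed.

Lemma Xa_mono (a b : L) : a <= b -> subP (Xa a) (Xa b).
Proof. by move=> ab x [Xx xa]; split=> //; exact: filter_up Xx xa ab. Qed.

Lemma Xa_meet (a b : L) : interP (Xa a) (Xa b) = Xa (a `&` b).
Proof.
apply: predE => x; split=> [[[Xx xa] [_ xb]]|[Xx xab]].
  by split=> //; exact: filter_meet.
by split; [apply: (Xa_mono (leIl a b))|apply: (Xa_mono (leIr b a))]; split.
Qed.

Lemma Ya_join (a b : L) : interP (Ya a) (Ya b) = Ya (a `|` b).
Proof.
apply: predE => y; split=> [[[Yy ya] [_ yb]]|[Yy yab]].
  by split=> //; exact: ideal_join.
by split; split=> //; apply: ideal_down Yy yab _; [exact: leUl|exact: leUr].
Qed.

Lemma primeX_Xa (a : L) : primeX L (Xa a) = Ya a.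
Proof.
apply: predE => y; split=> [[Yy meets]|[Yy ya]]; last first.
  by split=> // x [_ xa]; exists a.
split=> //; have [->|a_neq0] := eqVneq a \bot; first exact: ideal_bot.
have [b [ab yb]] := meets _ (principal_filter a_neq0).
exact: ideal_down Yy yb ab.
Qed.

Lemma primeX_anti (U V : (L -> Prop) -> Prop) :
  subP U V -> subP (primeX L V) (primeX L U).
Proof. by move=> UV y [Yy meets]; split=> // x /UV; exact: meets. Qed.

Lemma primeY_anti (U V : (L -> Prop) -> Prop) :
  subP U V -> subP (primeY L V) (primeY L U).
Proof. by move=> UV x [Xx meets]; split=> // y /UV; exact: meets. Qed.

Lemma primeX_union (U V : (L -> Prop) -> Prop) :
  primeX L (unionP U V) = interP (primeX L U) (primeX L V).
Proof.
apply: predE => y; split=> [[Yy meets]|[[Yy mU] [_ mV]]].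
  by split; split=> // x xW; apply: meets; [left|right].
by split=> // x [/mU|/mV].
Qed.

Definition list_union (s : list ((L -> Prop) -> Prop)) : (L -> Prop) -> Prop :=
  fun x => exists V, List.In V s /\ V x.

Lemma primeX_list_union (s : list ((L -> Prop) -> Prop)) :
  (forall V, List.In V s -> inB L V) -> exists c, primeX L (list_union s) = Ya c.
Proof.
elim: s => [_|V s IH basic].
  exists \bot; apply: predE => y; split=> [[Yy _]|[Yy _]].
    by split=> //; exact: ideal_bot.
  by split=> // x [W [[] _]].
have [a ->] := basic V (or_introl erefl).
have [c eqc] := IH (fun W sW => basic W (or_intror sW)).
exists (a `|` c); rewrite -Ya_join -primeX_Xa -eqc -primeX_union.
congr (primeX L); apply: predE => x; split.
  by move=> [W [[<-|sW] Wx]]; [left|right; exists W].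
by move=> [xa|[W [sW Wx]]]; [exists (Xa a); split; [left|]|exists W; split; [right|]].
Qed.

Lemma Xa_open (a : L) : openX L (Xa a).
Proof.
exists (fun b => b = a); apply: predE => x.
by split=> [xa|[b [-> xb]]] //; exists a.
Qed.

(* X_a is compact: a cover of its least point already covers it. *)
Lemma Xa_compact (a : L) : compactX L (Xa a).
Proof.
move=> Cov Cov_open covers.
have [->|a_neq0] := eqVneq a \bot.
  by exists nil; split=> [V []|x /Xa_bot].
have [V [CovV Va]] := covers _ (principal_filter a_neq0).
have [S eqV] := Cov_open V CovV.
move: (Va); rewrite eqV => -[b [Sb [_ ab]]].
exists (V :: nil); split=> [W [<-|[]]//|x xa].
exists V; split; first by left.
by rewrite eqV; exists b; split=> //; exact: Xa_mono ab _ xa.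
Qed.

End Polarity.

Section Duality.
Variables (disp : Order.disp_t) (L : tbLatticeType disp).
Let Ld := (L^d)%type.

(* Filters of L^d are the ideals of L and conversely; both are literally the
   same conditions up to the order of quantified variables. *)
Lemma Xset_dual : Xset Ld = Yset L.
Proof.
apply: predE => P; split=> -[[ne [cl op]] pr]; (split; last by []);
  (split; first by []); split=> a b; by [exact: (cl b a)|exact: op].
Qed.

Lemma Yset_dual : Yset Ld = Xset L.
Proof.
apply: predE => P; split=> -[[ne [cl op]] pr]; (split; last by []);
  (split; first by []); split=> a b; by [exact: (cl b a)|exact: op].
Qed.

Lemma Xa_dual : @Xa _ Ld = @Ya _ L.
Proof. by rewrite /Xa /Ya Xset_dual. Qed.

Lemma Ya_dual : @Ya _ Ld = @Xa _ L.
Proof. by rewrite /Xa /Ya Yset_dual. Qed.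

Lemma par_sym (x y : L -> Prop) : par L x y -> par L y x.
Proof. by move=> [a [xa ya]]; exists a. Qed.

Lemma primeX_dual : primeX Ld = primeY L.
Proof.
apply: functional_extensionality => U; rewrite /primeX /primeY Yset_dual.
by apply: predE => x; split=> -[Xx meets]; split=> // y /meets /par_sym.
Qed.

Lemma primeY_dual : primeY Ld = primeX L.
Proof.
apply: functional_extensionality => V; rewrite /primeX /primeY Xset_dual.
by apply: predE => y; split=> -[Yy meets]; split=> // x /meets /par_sym.
Qed.

Lemma openX_dual : openX Ld = openY L.
Proof. by rewrite /openX /openY Xa_dual. Qed.

Lemma compactX_dual : compactX Ld = compactY L.
Proof. by rewrite /compactX /compactY openX_dual. Qed.

Lemma stableX_dual : stableX Ld = costableY L.
Proof. by rewrite /stableX /costableY primeX_dual primeY_dual. Qed.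

Lemma inB_dual : inB Ld = inC L.
Proof. by rewrite /inB /inC Xa_dual. Qed.

End Duality.

Section BasicSets.
Variables (disp : Order.disp_t) (L : tbLatticeType disp).

Lemma primeY_Ya (a : L) : primeY L (Ya a) = Xa a.
Proof. by have := primeX_Xa (a : L^d); rewrite Xa_dual Ya_dual primeX_dual. Qed.

Lemma Xa_stable (a : L) : stableX L (Xa a).
Proof. by rewrite /stableX primeX_Xa primeY_Ya. Qed.

(* Compact open stable sets are basic: by compactness A is a finite union U of
   basic sets, and then A = U'' = (Y^c)' = X_c. *)
Lemma compact_open_stable_basic (A : (L -> Prop) -> Prop) :
  openX L A -> compactX L A -> stableX L A -> inB L A.
Proof.
move=> [S eqA] cptA stA.
pose Cov V := exists a, S a /\ V = Xa a.
have Cov_open V : Cov V -> openX L V by move=> [a [_ ->]]; exact: Xa_open.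
have covers x : A x -> exists V, Cov V /\ V x.
  by rewrite eqA => -[a [Sa xa]]; exists (Xa a); split=> //; exists a.
have [s [sCov s_covers]] := cptA Cov Cov_open covers.
have s_basic V : List.In V s -> inB L V by move=> /sCov [a [_ ->]]; exists a.
have eqAs : A = list_union s.
  apply: predE => x; split=> [/s_covers //|[V [/sCov [a [Sa ->]] xa]]].
  by rewrite eqA; exists a.
have [c eqc] := primeX_list_union s_basic.
by exists c; rewrite stA eqAs eqc primeY_Ya.
Qed.

Lemma inB_char (A : (L -> Prop) -> Prop) :
  inB L A <-> openX L A /\ compactX L A /\ stableX L A.
Proof.
split=> [[a ->]|[opA [cptA stA]]]; last first.
  exact: compact_open_stable_basic opA cptA stA.
by split; [exact: Xa_open|split; [exact: Xa_compact|exact: Xa_stable]].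
Qed.

Lemma stable_sub_primeX (A1 A2 : (L -> Prop) -> Prop) :
  stableX L A1 -> stableX L A2 ->
  subP A1 A2 <-> subP (primeX L A2) (primeX L A1).
Proof.
move=> st1 st2; split; first exact: primeX_anti.
by move=> rev; rewrite st1 st2; exact: primeY_anti rev.
Qed.

Lemma B_bounds (a : L) : subP (Xa \bot) (Xa a) /\ subP (Xa a) (Xa \top).
Proof. by split; apply: Xa_mono; [exact: le0x|exact: lex1]. Qed.

Lemma B_sublattice (A1 A2 : (L -> Prop) -> Prop) : inB L A1 -> inB L A2 ->
  inB L (interP A1 A2) /\ inB L (primeY L (primeX L (unionP A1 A2))).
Proof.
move=> [a ->] [b ->]; split; first by exists (a `&` b); rewrite Xa_meet.
by exists (a `|` b); rewrite primeX_union !primeX_Xa Ya_join primeY_Ya.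
Qed.

End BasicSets.

Theorem proposition4p4 (disp : Order.disp_t) (L : tbLatticeType disp) :
  (* B = compact-open Galois-stable subsets of X *)
  (forall A : (L -> Prop) -> Prop,
     inB L A <-> (openX L A /\ compactX L A /\ stableX L A)) /\
  (* C = compact-open Galois-co-stable subsets of Y *)
  (forall B : (L -> Prop) -> Prop,
     inC L B <-> (openY L B /\ compactY L B /\ costableY L B)) /\
  (* (X_a)' = Y^a and (Y^a)' = X_a *)
  (forall a : L, primeX L (Xa a) = Ya a /\ primeY L (Ya a) = Xa a) /\
  (* A |-> A' is a dual (order-reversing) isomorphism from B onto C *)
  (forall A, inB L A -> inC L (primeX L A)) /\
  (forall B, inC L B -> exists A, inB L A /\ primeX L A = B) /\
  (forall A1 A2, inB L A1 -> inB L A2 ->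
     (subP A1 A2 <-> subP (primeX L A2) (primeX L A1))) /\
  (* B is a bounded lattice, a sublattice of G(X) *)
  (forall a : L, subP (Xa (\bot%O : L)) (Xa a) /\ subP (Xa a) (Xa (\top%O : L))) /\
  (forall A1 A2, inB L A1 -> inB L A2 ->
     inB L (interP A1 A2) /\ inB L (primeY L (primeX L (unionP A1 A2)))) /\
  (* C is a bounded lattice, a sublattice of G(Y) *)
  (forall a : L, subP (Ya (\top%O : L)) (Ya a) /\ subP (Ya a) (Ya (\bot%O : L))) /\
  (forall B1 B2, inC L B1 -> inC L B2 ->
     inC L (interP B1 B2) /\ inC L (primeX L (primeY L (unionP B1 B2)))).
Proof.
split; first exact: inB_char.
split.
  by move=> B; rewrite -inB_dual -openX_dual -compactX_dual -stableX_dual inB_char.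
split; first by move=> a; rewrite primeX_Xa primeY_Ya.
split; first by move=> A [a ->]; exists a; rewrite primeX_Xa.
split; first by move=> B [a ->]; exists (Xa a); split; [exists a|rewrite primeX_Xa].
split.
  by move=> A1 A2 [a ->] [b ->]; apply: stable_sub_primeX; exact: Xa_stable.
split; first exact: B_bounds.
split; first exact: B_sublattice.
split; first by move=> a; have := B_bounds (a : L^d); rewrite Xa_dual.
move=> B1 B2; have := @B_sublattice _ (L^d)%type B1 B2.
by rewrite inB_dual primeX_dual primeY_dual.
Qed.
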